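(* Let $D\ge1$, let $Q_D$ be the $D$-dimensional hypercube on $X=\{0,1\}^D$ with adjacency matrix $A$. The matrices $$\alpha^*_iA\alpha^*_j-\alpha^*_jA\alpha^*_i,\qquad 1\le i<j\le D,$$ form a basis for the space of antisymmetric $A$-like matrices of $Q_D$. In particular this space has dimension $\binom{D}{2}$.
   Context: $Q_D$ is the graph with vertex set $X=\{0,1\}^D$ (sequences $x=(x_1,\ldots,x_D)$, $x_i\in\{0,1\}$), two vertices adjacent iff they differ in exactly one coordinate. Matrices are real with rows and columns indexed by $X$. A matrix $B$ is $A$-like if $BA=AB$ and $B_{xy}=0$ for all $x,y\in X$ that are neither equal nor adjacent; $B$ is antisymmetric if $B^t=-B$. For $1\le i\le D$, $\alpha^*_i$ is the diagonal matrix with $(x,x)$-entry $1$ if $x_i=0$ and $-1$ if $x_i=1$. *)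

From HB Require Import structures.
From mathcomp Require Import all_boot all_order all_algebra.
Set Implicit Arguments. Unset Strict Implicit. Unset Printing Implicit Defensive.
Import Order.TTheory GRing.Theory Num.Theory.
Local Open Scope ring_scope.

(* Vertex set X = {0,1}^D, coordinates indexed by 'I_D (0-based). *)
Definition vert (D : nat) := {ffun 'I_D -> bool}.

Definition mxX (R : nzRingType) (D : nat) := 'M[R]_#|{: vert D}|.

Definition entry (R : nzRingType) (D : nat) (B : mxX R D) (x y : vert D) : R :=
  B (enum_rank x) (enum_rank y).

Definition adj (D : nat) (x y : vert D) : bool := #|[set k | x k != y k]| == 1%N.

Definition adjA (R : nzRingType) (D : nat) : mxX R D :=
  \matrix_(i, j) (if adj (enum_val i : vert D) (enum_val j) then 1 else 0).

Definition alphaS (R : nzRingType) (D : nat) (i : 'I_D) : mxX R D :=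
  \matrix_(a, b) (if a == b then (if (enum_val a : vert D) i then -1 else 1) else 0).

Definition A_like (R : nzRingType) (D : nat) (B : mxX R D) : Prop :=
  B *m adjA R D = adjA R D *m B /\
  forall x y : vert D, x != y -> ~~ adj x y -> entry B x y = 0.

Definition antisym (R : nzRingType) (D : nat) (B : mxX R D) : Prop := B^T = - B.

Definition genM (R : nzRingType) (D : nat) (i j : 'I_D) : mxX R D :=
  alphaS R i *m adjA R D *m alphaS R j - alphaS R j *m adjA R D *m alphaS R i.

Definition pairs_lt (D : nat) : seq ('I_D * 'I_D) :=
  [seq p <- [seq (i, j) : 'I_D * 'I_D | i <- enum 'I_D, j <- enum 'I_D] | (nat_of_ord p.1 < nat_of_ord p.2)%N].

Definition genList (R : nzRingType) (D : nat) : seq (mxX R D) :=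
  [seq genM R p.1 p.2 | p <- pairs_lt D].

From HB Require Import structures.
From mathcomp Require Import all_boot all_order all_algebra.
From mathcomp Require Import ring.
Import Order.TTheory GRing.Theory Num.Theory.
Local Open Scope ring_scope.

Set Implicit Arguments. Unset Strict Implicit. Unset Printing Implicit Defensive.

(* An antisymmetric A-like matrix B is determined by its values on directed
   edges, v x k = B(x, x + e_k), which satisfy v (x + e_k) k = - v x k.
   Comparing (BA)_xz with (AB)_xz for z = x and for z at distance 2 shows that
   B commutes with A iff v has zero divergence at every vertex and, on every
   square x, x + e_p, x + e_q, x + e_p + e_q, the flow leaving x equals the flow
   entering the opposite corner.  Such a v is determined by the binom(D,2)
   numbers v 0 k - v e_j k (k < j): when they vanish, v vanishes at the origin,
   and induction on the Hamming weight of x, going around squares, gives v = 0.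
   The generator indexed by (i, j) has coordinate 4 at (i, j) and 0 elsewhere,
   so the generators are independent and span. *)

Lemma neq_and_eq (T : eqType) (a b c : T) : a != b -> (c == a) && (c == b) = false.
Proof. by move=> ab; apply/andP => -[/eqP ca /eqP cb]; rewrite -ca -cb eqxx in ab. Qed.

Section Cube.
Variable D : nat.
Implicit Types (x y : vert D) (k l : 'I_D).

Definition flip x k : vert D := [ffun t => if t == k then ~~ x t else x t].
Definition origin : vert D := [ffun _ => false].
Definition weight x := #|[set t | x t]|.

Lemma flipE x k t : flip x k t = if t == k then ~~ x t else x t.
Proof. by rewrite ffunE. Qed.

Lemma flipK k : involutive (flip^~ k).
Proof. by move=> x; apply/ffunP => t; rewrite !flipE; case: eqP; rewrite ?negbK. Qed.

Lemma flipC x k l : flip (flip x k) l = flip (flip x l) k.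
Proof. by apply/ffunP => t; rewrite !flipE; case: (t =P k); case: (t =P l). Qed.

Lemma flip_inj x : injective (flip x).
Proof. by move=> k l /ffunP /(_ k); rewrite !flipE eqxx; case: eqP => //; case: (x k). Qed.

Lemma adjC x y : adj x y = adj y x.
Proof. by rewrite /adj; congr (_ == 1)%N; apply: eq_card => t; rewrite !inE eq_sym. Qed.

Lemma adj_flip x k : adj x (flip x k).
Proof.
apply/cards1P; exists k; apply/setP => t; rewrite !inE flipE.
by case: (t =P k) => _; case: (x t).
Qed.

Lemma adj_flipP x y : adj x y -> exists k, y = flip x k.
Proof.
move=> /cards1P [k] /setP Hk; exists k; apply/ffunP => t.
by move: (Hk t); rewrite !inE flipE; case: (t =P k) => _; case: (x t); case: (y t).
Qed.

Lemma adj_flipl x y k : adj (flip x k) y = adj x (flip y k).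
Proof.
rewrite /adj; congr (_ == 1)%N; apply: eq_card => t; rewrite !inE !flipE.
by case: (t =P k) => _ //; case: (x t); case: (y t).
Qed.

Lemma not_adj_flip3 x k1 k2 k3 : k1 != k2 -> k1 != k3 -> k2 != k3 ->
  ~~ adj x (flip (flip (flip x k1) k2) k3).
Proof.
move=> k12 k13 k23; apply/negP => /cards1P [m] /setP Hm.
have Hk t : t \in [set m] = [|| t == k1, t == k2 | t == k3].
  rewrite -Hm !inE !flipE.
  have [-> | t1] := eqVneq t k1; first by rewrite (negPf k12) (negPf k13); case: (x k1).
  have [-> | t2] := eqVneq t k2; first by rewrite (negPf k23); case: (x k2).
  have [-> | t3] := eqVneq t k3; first by case: (x k3).
  by rewrite eqxx.
move: (Hk k1) (Hk k2); rewrite !inE !eqxx orbT => /eqP <- /eqP E.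
by rewrite E eqxx in k12.
Qed.

Lemma weight_flipF x k : ~~ x k -> weight (flip x k) = (weight x).+1.
Proof.
move=> xk; rewrite /weight (cardsD1 k) inE flipE eqxx xk add1n; congr _.+1.
apply: eq_card => t; rewrite !inE flipE.
by case: (t =P k) => [->|_]; rewrite ?eqxx ?(negPf xk).
Qed.

Lemma weight_flipT x k : x k -> weight x = (weight (flip x k)).+1.
Proof. by move=> xk; rewrite -[in LHS](flipK k x) weight_flipF // flipE eqxx xk. Qed.

Lemma weight_le1P x : (weight x <= 1)%N -> x = origin \/ exists k, x = flip origin k.
Proof.
rewrite leq_eqVlt ltnS leqn0 => /orP [/cards1P [k] /setP Hk | /eqP/cards0_eq /setP H0].
  right; exists k; apply/ffunP => t.
  by move: (Hk t); rewrite !inE flipE ffunE => ->; case: (t == k).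
by left; apply/ffunP => t; move: (H0 t); rewrite !inE ffunE => ->.
Qed.

End Cube.

Arguments origin {D}.

Section Entries.
Variables (R : nzRingType) (D : nat).
Implicit Types (x y z : vert D) (i k : 'I_D) (B C : mxX R D).

Definition sgb (b : bool) : R := if b then -1 else 1.

Lemma entryP B C : entry B =2 entry C -> B = C.
Proof.
move=> H; apply/matrixP => a b.
by have := H (enum_val a) (enum_val b); rewrite /entry !enum_valK.
Qed.

Lemma entry0 x y : entry (0 : mxX R D) x y = 0.
Proof. by rewrite /entry mxE. Qed.

Lemma entryD B C x y : entry (B + C) x y = entry B x y + entry C x y.
Proof. by rewrite /entry mxE. Qed.

Lemma entryN B x y : entry (- B) x y = - entry B x y.
Proof. by rewrite /entry mxE. Qed.

Lemma entryZ a B x y : entry (a *: B) x y = a * entry B x y.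
Proof. by rewrite /entry mxE. Qed.

Lemma entry_tr B x y : entry B^T x y = entry B y x.
Proof. by rewrite /entry mxE. Qed.

Lemma entry_antisym B x y : antisym B -> entry B y x = - entry B x y.
Proof. by move=> aB; rewrite -entry_tr aB entryN. Qed.

Lemma entry_mul B C x y : entry (B *m C) x y = \sum_z entry B x z * entry C z y.
Proof.
rewrite /entry mxE (reindex (@enum_rank (vert D))) //=.
by exists enum_val => t _; rewrite ?enum_rankK ?enum_valK.
Qed.

Lemma entry_adj x y : entry (adjA R D) x y = if adj x y then 1 else 0.
Proof. by rewrite /entry mxE !enum_rankK. Qed.

Lemma entry_alpha i x y : entry (alphaS R i) x y = if x == y then sgb (x i) else 0.
Proof. by rewrite /entry mxE !enum_rankK (inj_eq enum_rank_inj). Qed.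

Lemma entry_alpha_mul i B x y : entry (alphaS R i *m B) x y = sgb (x i) * entry B x y.
Proof.
rewrite entry_mul (bigD1 x) //= entry_alpha eqxx big1 ?addr0 // => z zx.
by rewrite entry_alpha eq_sym (negPf zx) mul0r.
Qed.

Lemma entry_mul_alpha i B x y : entry (B *m alphaS R i) x y = entry B x y * sgb (y i).
Proof.
rewrite entry_mul (bigD1 y) //= entry_alpha eqxx big1 ?addr0 // => z zy.
by rewrite entry_alpha (negPf zy) mulr0.
Qed.

Lemma sum_adj_flip (F : vert D -> R) y :
  \sum_z (if adj z y then F z else 0) = \sum_k F (flip y k).
Proof.
rewrite -big_mkcond (eq_bigl (mem (flip y @: [set: 'I_D]))) => [|z].
  rewrite big_imset /=; last by move=> k l _ _; apply: flip_inj.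
  by apply: eq_bigl => k; rewrite inE.
apply/idP/imsetP => [|[k _ ->]]; last by rewrite adjC adj_flip.
by rewrite adjC => /adj_flipP [k ->]; exists k.
Qed.

Lemma entry_mul_adj B x y : entry (B *m adjA R D) x y = \sum_k entry B x (flip y k).
Proof.
rewrite entry_mul -sum_adj_flip; apply: eq_bigr => z _.
by rewrite entry_adj; case: adj; rewrite ?mulr1 ?mulr0.
Qed.

Lemma entry_adj_mul B x y : entry (adjA R D *m B) x y = \sum_k entry B (flip x k) y.
Proof.
rewrite entry_mul -(sum_adj_flip (fun z => entry B z y)); apply: eq_bigr => z _.
by rewrite entry_adj adjC; case: adj; rewrite ?mul1r ?mul0r.
Qed.

End Entries.

(* [v x k] is the value of an edge function on the edge from [x] to [flip x k]. *)
Section EdgeFunctions.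
Variables (R : zmodType) (D : nat) (v : vert D -> 'I_D -> R).

Definition flow_antisym := forall x k, v (flip x k) k = - v x k.

Definition divergence_free := forall x, \sum_k v x k = 0.

Definition square_balanced :=
  forall x p q, p != q -> v x p + v x q = v (flip x p) q + v (flip x q) p.

End EdgeFunctions.

Section Commutation.
Variables (R : nzRingType) (D : nat).
Implicit Types (x y : vert D) (k p q : 'I_D) (B : mxX R D).

Definition edge_val B x k := entry B x (flip x k).

Definition edge_supported B := forall x y, ~~ adj x y -> entry B x y = 0.

Lemma edge_val_flow_antisym B : antisym B -> flow_antisym (edge_val B).
Proof. by move=> aB x k; rewrite /edge_val flipK entry_antisym. Qed.

Lemma sum_flip_antisym B x : antisym B ->
  \sum_k entry B (flip x k) x = - \sum_k edge_val B x k.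
Proof. by move=> aB; rewrite -sumrN; apply: eq_bigr => k _; rewrite entry_antisym. Qed.

(* Both sides of [(BA)_{xz} = (AB)_{xz}] for [z] at distance 2 from [x]. *)
Lemma sum_flip2 B x p q : edge_supported B -> p != q ->
  \sum_k entry B x (flip (flip (flip x p) q) k) = edge_val B x p + edge_val B x q /\
  \sum_k entry B (flip x k) (flip (flip x p) q) =
    edge_val B (flip x p) q + edge_val B (flip x q) p.
Proof.
move=> sB pq; have qp : q != p by rewrite eq_sym.
split; rewrite (bigD1 p) // (bigD1 q) //= big1 ?addr0.
- by rewrite flipK flipC flipK addrC.
- by move=> k /andP [kp kq]; apply: sB; apply: not_adj_flip3; rewrite // eq_sym.
- by rewrite /edge_val flipC.
by move=> k /andP [kp kq]; apply: sB; rewrite adj_flipl not_adj_flip3 // eq_sym.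
Qed.

Lemma A_like0 : A_like (0 : mxX R D).
Proof. by split=> [|x y _ _]; rewrite ?mul0mx ?mulmx0 ?entry0. Qed.

Lemma edge_conditions_commute B : edge_supported B -> antisym B ->
  divergence_free (edge_val B) -> square_balanced (edge_val B) ->
  B *m adjA R D = adjA R D *m B.
Proof.
move=> sB aB div sq; apply: entryP => x z; rewrite entry_mul_adj entry_adj_mul.
have [k0 adj_k0 | nadj] := pickP (fun k => adj x (flip z k)); last first.
  by rewrite !big1 // => k _; apply: sB; rewrite ?adj_flipl nadj.
have [m Hm] := adj_flipP adj_k0.
have -> : z = flip (flip x m) k0 by rewrite -Hm flipK.
have [<- | mk] := eqVneq m k0; last by have [-> ->] := sum_flip2 x sB mk; apply: sq.
by rewrite flipK sum_flip_antisym // div oppr0.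
Qed.

End Commutation.

Lemma eq_oppr_eq0 (R : numDomainType) (a : R) : (a == - a) = (a == 0).
Proof. by rewrite -subr_eq0 opprK -mulr2n mulrn_eq0. Qed.

Section CommutationChar0.
Variables (R : numDomainType) (D : nat).
Implicit Types (B : mxX R D).

Lemma commute_edge_conditions B : edge_supported B -> antisym B ->
  B *m adjA R D = adjA R D *m B ->
  divergence_free (edge_val B) /\ square_balanced (edge_val B).
Proof.
move=> sB aB comm.
have sums x z : \sum_k entry B x (flip z k) = \sum_k entry B (flip x k) z.
  by rewrite -entry_mul_adj -entry_adj_mul comm.
split=> [x | x p q pq]; last first.
  by have := sums x (flip (flip x p) q); case: (sum_flip2 x sB pq) => -> ->.
by apply/eqP; rewrite -eq_oppr_eq0 -sum_flip_antisym // -sums.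
Qed.

Lemma A_like_edge_supported B : antisym B -> A_like B -> edge_supported B.
Proof.
move=> aB [_ sB] x y; have [<- _ | ] := eqVneq x y; last exact: sB.
by apply/eqP; rewrite -eq_oppr_eq0 -entry_antisym.
Qed.

End CommutationChar0.

Section Generators.
Variables (R : comNzRingType) (D : nat).
Implicit Types (x y : vert D) (i j k p : 'I_D) (B C : mxX R D).

Lemma sgb_flip x k t : sgb R (flip x k t) = if t == k then - sgb R (x t) else sgb R (x t).
Proof. by rewrite flipE /sgb; case: (t == k); case: (x t); rewrite ?opprK. Qed.

Lemma entry_genM i j x y : entry (genM R i j) x y =
  if adj x y then sgb R (x i) * sgb R (y j) - sgb R (x j) * sgb R (y i) else 0.
Proof.
rewrite /genM entryD entryN !entry_mul_alpha !entry_alpha_mul entry_adj.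
by case: adj; rewrite ?mulr1 ?mulr0 ?mul0r ?subrr.
Qed.

Lemma edge_val_genM i j x k : edge_val (genM R i j) x k =
  sgb R (x i) * sgb R (flip x k j) - sgb R (x j) * sgb R (flip x k i).
Proof. by rewrite /edge_val entry_genM adj_flip. Qed.

Lemma genM_edge_supported i j : edge_supported (genM R i j).
Proof. by move=> x y /negPf nadj; rewrite entry_genM nadj. Qed.

Lemma genM_antisym i j : antisym (genM R i j).
Proof.
apply: entryP => x y; rewrite entry_tr entryN !entry_genM adjC.
by case: adj; rewrite ?oppr0 // opprB mulrC [sgb R (y j) * _]mulrC.
Qed.

Lemma genM_divergence_free i j : i != j -> divergence_free (edge_val (genM R i j)).
Proof.
move=> ij x; have ji : j != i by rewrite eq_sym.
rewrite (bigD1 i) // (bigD1 j) //= big1 ?addr0.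
  by rewrite !edge_val_genM !sgb_flip !eqxx (negPf ij) (negPf ji); ring.
move=> k /andP [ki kj]; rewrite edge_val_genM !sgb_flip.
by rewrite [i == k]eq_sym [j == k]eq_sym (negPf ki) (negPf kj) mulrC subrr.
Qed.

Lemma genM_square_balanced i j : i != j -> square_balanced (edge_val (genM R i j)).
Proof.
move=> ij x p q pq; rewrite !edge_val_genM !sgb_flip.
move: (neq_and_eq p ij) (neq_and_eq q ij); rewrite ![p == _]eq_sym ![q == _]eq_sym.
move: (neq_and_eq i pq) (neq_and_eq j pq).
by case: (i == p); case: (i == q); case: (j == p); case: (j == q) => //= _ _ _ _; ring.
Qed.

Lemma genM_A_like i j : A_like (genM R i j).
Proof.
have [-> | ij] := eqVneq i j.
  by rewrite /genM subrr; apply: A_like0.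
split=> [|x y _]; last exact: genM_edge_supported.
apply: edge_conditions_commute.
- exact: genM_edge_supported.
- exact: genM_antisym.
- exact: genM_divergence_free.
- exact: genM_square_balanced.
Qed.

Lemma antisym_A_like_scaleD a B C : antisym B -> A_like B -> antisym C -> A_like C ->
  antisym (a *: B + C) /\ A_like (a *: B + C).
Proof.
move=> aB [cB sB] aC [cC sC].
split; first by rewrite /antisym linearP /= aB aC scalerN opprD.
split; first by rewrite mulmxDl mulmxDr -scalemxAl -scalemxAr cB cC.
by move=> x y xy nadj; rewrite entryD entryZ sB ?sC ?mulr0 ?addr0.
Qed.

Definition pair_coord (q : 'I_D * 'I_D) B : R :=
  edge_val B origin q.1 - edge_val B (flip origin q.2) q.1.

Fact pair_coord_is_scalar (q : 'I_D * 'I_D) : scalar (pair_coord q).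
Proof. by move=> a B C; rewrite /pair_coord /edge_val !entryD !entryZ; ring. Qed.

HB.instance Definition _ (q : 'I_D * 'I_D) :=
  GRing.isSemilinear.Build R (mxX R D) R _ (pair_coord q)
    (GRing.semilinear_linear (pair_coord_is_scalar q)).

Lemma pair_coord_genM (a b k j : 'I_D) : (a < b)%N -> (k < j)%N ->
  pair_coord (k, j) (genM R a b) = if (a == k) && (b == j) then 4 else 0.
Proof.
move=> ab kj; rewrite /pair_coord /= !edge_val_genM !sgb_flip !ffunE /sgb.
have [neq_ab neq_kj] : a != b /\ k != j by rewrite !neq_ltn ab kj.
have ba_kj : (b == k) && (a == j) = false.
  apply/andP => -[/eqP bk /eqP aj].
  by move: kj; rewrite -bk -aj => /(ltn_trans ab); rewrite ltnn.
move: ba_kj (neq_and_eq a neq_kj) (neq_and_eq b neq_kj).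
move: (neq_and_eq k neq_ab) (neq_and_eq j neq_ab); rewrite ![k == _]eq_sym ![j == _]eq_sym.
by case: (a == k); case: (a == j); case: (b == k); case: (b == j) => //= *; ring.
Qed.

End Generators.

Lemma biorthogonal_free (K : fieldType) (V : vectType K) (T : eqType) (r : seq T)
    (F : T -> V) (phi : T -> {scalar V}) :
  uniq r -> (forall p, p \in r -> phi p (F p) != 0) ->
  (forall p q, p \in r -> q \in r -> p != q -> phi q (F p) = 0) ->
  free [seq F p | p <- r].
Proof.
elim: r => [|p r IH] /=; first by rewrite nil_free.
move=> /andP [pr ur] nz orth.
rewrite free_cons IH // => [|q qr|q s qr sr]; last 2 first.
- by apply: nz; rewrite inE qr orbT.
- by apply: orth; rewrite inE ?qr ?sr orbT.
rewrite andbT; apply/negP => Fp_span; have Fp := coord_span (X := in_tuple _) Fp_span.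
have := nz p (mem_head _ _); rewrite Fp linear_sum big1 ?eqxx // => i _.
have /mapP [q qr ->] := mem_nth 0 (ltn_ord i).
rewrite linearZ /= orth ?mulr0 ?inE ?eqxx ?qr ?orbT //.
by apply: contraNneq pr => <-.
Qed.

Section Pairs.
Variable D : nat.

Lemma mem_pairs_lt (p : 'I_D * 'I_D) : (p \in pairs_lt D) = (p.1 < p.2)%N.
Proof.
rewrite mem_filter andb_idr // => _; case: p => i j.
by apply: (allpairs_f (fun i j => (i, j))); rewrite mem_enum.
Qed.

Lemma pairs_lt_uniq : uniq (pairs_lt D).
Proof.
apply/filter_uniq/allpairs_uniq; rewrite ?enum_uniq //.
by move=> [a b] [c d] _ _ /= [-> ->].
Qed.

Lemma size_pairs_lt : size (pairs_lt D) = 'C(D, 2).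
Proof.
rewrite size_filter -sum1_count big_mkcond big_allpairs /= big_enum /= exchange_big /=.
rewrite (eq_bigr (fun j : 'I_D => nat_of_ord j)) => [|j _].
  by rewrite big_enum -(big_mkord xpredT (fun j => j)) bin2_sum.
rewrite -big_mkcond /= -(big_ord_widen D (fun _ => 1%N) (ltnW (ltn_ord j))).
by rewrite sum1_card card_ord.
Qed.

End Pairs.

Section PairCoordinates.
Variables (R : comNzRingType) (D : nat).

Lemma pair_coord_genM_pairs (p q : 'I_D * 'I_D) : p \in pairs_lt D -> q \in pairs_lt D ->
  pair_coord q (genM R p.1 p.2) = if p == q then 4 else 0.
Proof. by case: p q => [a b] [k j]; rewrite !mem_pairs_lt xpair_eqE; apply: pair_coord_genM. Qed.

Lemma pair_coord_lincomb (c : 'I_D * 'I_D -> R) q : q \in pairs_lt D ->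
  pair_coord q (\sum_(p <- pairs_lt D) c p *: genM R p.1 p.2) = c q * 4.
Proof.
move=> qP; rewrite linear_sum (bigD1_seq q) ?pairs_lt_uniq //= big1_seq => [|p /andP [pq pP]].
  by rewrite linearZ /= pair_coord_genM_pairs // eqxx addr0.
by rewrite linearZ /= pair_coord_genM_pairs // (negPf pq) mulr0.
Qed.

End PairCoordinates.

Section FlowUniqueness.
Variables (R : numDomainType) (D : nat) (v : vert D -> 'I_D -> R).
Hypotheses (vN : flow_antisym v) (v_div : divergence_free v) (v_sq : square_balanced v).
Hypothesis v_origin : forall j k, j != k -> v (flip origin j) k = v origin k.
Implicit Types (x : vert D) (i j k : 'I_D).

Lemma flow_origin k : v origin k = 0.
Proof.
have := v_div origin; have := v_div (flip origin k).
rewrite (bigD1 k) //= vN (eq_bigr (fun l => v origin l)) => [h1|l lk]; last first.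
  by rewrite v_origin // eq_sym.
rewrite (bigD1 k) //= => h2.
apply/eqP; rewrite -eq_oppr_eq0; apply/eqP.
by apply: (addIr (\sum_(l < D | l != k) v origin l)); rewrite h1 h2.
Qed.

Lemma flow_square x i k : i != k -> (forall l, v (flip x i) l = 0) ->
  v x k = - v (flip (flip x i) k) i.
Proof.
move=> ik v0; apply/eqP; rewrite -addr_eq0.
by have := v_sq (flip x i) ik; rewrite flipK !v0 addr0 => <-.
Qed.

Lemma flow_light x k : (weight x <= 1)%N -> ~~ x k -> v x k = 0.
Proof.
move=> /weight_le1P [-> | [j ->]] xk; first exact: flow_origin.
rewrite v_origin ?flow_origin //; apply: contraNneq xk => ->.
by rewrite flipE eqxx ffunE.
Qed.

(* Going around squares through two distinct [i], [j] in the support of [x]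
   yields [v x k = - v x k]. *)
Lemma flow_heavy x k : (forall y, (weight y < weight x)%N -> forall l, v y l = 0) ->
  (1 < weight x)%N -> ~~ x k -> v x k = 0.
Proof.
move=> IH wx xk.
have sq y i l : weight y = weight x -> y i -> ~~ y l ->
    v y l = - v (flip (flip y i) l) i.
  move=> wy yi yl; apply: flow_square; first by apply: contraNneq yl => <-.
  by apply: IH; rewrite -wy (weight_flipT yi).
have /card_gt0P [i] : (0 < weight x)%N by apply: ltnW.
rewrite inE => xi.
have /card_gt0P [j] : (0 < #|[set t | x t] :\ i|)%N.
  by move: wx; rewrite /weight (cardsD1 i) inE xi.
rewrite !inE => /andP [ji xj].
have ik : i != k by apply: contraNneq xk => <-.
have jk : j != k by apply: contraNneq xk => <-.
set z := flip (flip x i) k.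
have wz : weight z = weight x.
  by rewrite /z weight_flipF -?(weight_flipT xi) // flipE eq_sym (negPf ik).
have zj : z j by rewrite /z !flipE (negPf jk) (negPf ji).
have zi : ~~ z i by rewrite /z !flipE (negPf ik) eqxx xi.
have zji : flip (flip z j) i = flip (flip x j) k.
  by rewrite /z flipC [flip (flip (flip x i) k) i]flipC flipK flipC.
have e2 := sq z j i wz zj zi; rewrite zji in e2.
have e1 := sq x i k erefl xi xk; have e3 := sq x j k erefl xj xk.
apply/eqP; rewrite -eq_oppr_eq0; apply/eqP.
by rewrite [in RHS]e1 -/z e2 -e3 opprK.
Qed.

Lemma flow_eq0 x k : v x k = 0.
Proof.
suff weight_ind n y : weight y = n -> forall l, v y l = 0 by exact: weight_ind.
elim/ltn_ind: n y => n IH y wy l.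
have {}IH z : (weight z < weight y)%N -> forall l, v z l = 0.
  by rewrite wy => wz; apply: IH wz z erefl.
have [yl | yl] := boolP (y l).
  by rewrite -[y](flipK l) vN IH ?oppr0 // (weight_flipT yl).
have [wy1 | wy1] := leqP (weight y) 1; first exact: flow_light.
exact: flow_heavy.
Qed.

End FlowUniqueness.

Section Spanning.
Variables (R : numFieldType) (D : nat).
Implicit Types (B C : mxX R D).

Lemma antisym_A_like_eq0 B : antisym B -> A_like B ->
  (forall q, q \in pairs_lt D -> pair_coord q B = 0) -> B = 0.
Proof.
move=> aB lB coord0; have sB := A_like_edge_supported aB lB.
have [div sq] := commute_edge_conditions sB aB lB.1.
have coord0E (k j : 'I_D) : (k < j)%N ->
    edge_val B (flip origin j) k = edge_val B origin k.
  move=> kj; apply/esym/eqP; rewrite -subr_eq0.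
  by apply/eqP/(coord0 (k, j)); rewrite mem_pairs_lt.
have v_origin (j k : 'I_D) : j != k -> edge_val B (flip origin j) k = edge_val B origin k.
  move=> jk; have [kj | jk' | /val_inj kj] := ltngtP k j; first exact: coord0E.
    by have := sq origin j k jk; rewrite (coord0E j k jk') addrC => /addIr.
  by rewrite kj eqxx in jk.
have ev0 := flow_eq0 (edge_val_flow_antisym aB) div sq v_origin.
apply: entryP => x y; rewrite entry0.
by have [/adj_flipP [k ->] | ] := boolP (adj x y); [exact: ev0 | exact: sB].
Qed.

Lemma antisym_A_like_span B : antisym B -> A_like B -> B \in <<genList R D>>%VS.
Proof.
move=> aB lB; set C := \sum_(p <- pairs_lt D) (pair_coord p B / 4) *: genM R p.1 p.2.
have a0 : antisym (0 : mxX R D) by rewrite /antisym trmx0 oppr0.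
have [aC lC] : antisym C /\ A_like C.
  apply: (big_ind (fun M => antisym M /\ A_like M)) => [|C1 C2 [a1 l1] [a2 l2] | p _].
  - by split; [exact: a0 | exact: A_like0].
  - by have := antisym_A_like_scaleD 1 a1 l1 a2 l2; rewrite scale1r.
  have := antisym_A_like_scaleD (pair_coord p B / 4) (genM_antisym R p.1 p.2)
    (genM_A_like R p.1 p.2) a0 (A_like0 R D).
  by rewrite addr0.
have [aD lD] := antisym_A_like_scaleD (-1) aC lC aB lB; rewrite scaleN1r addrC in aD lD.
have /eqP : B - C = 0.
  apply: antisym_A_like_eq0 => // q qP.
  by rewrite linearB /= pair_coord_lincomb // divfK ?subrr ?pnatr_eq0.
rewrite subr_eq0 => /eqP ->; rewrite /C big_seq; apply: memv_suml => p pP.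
exact/memvZ/memv_span/map_f.
Qed.

End Spanning.

Theorem theorem9p7 (R : realFieldType) (D : nat) (hD : (1 <= D)%N) :
  [/\ (forall B, B \in genList R D -> antisym B /\ A_like B),
      free (genList R D),
      (forall B : mxX R D, antisym B -> A_like B -> B \in <<genList R D>>%VS)
    & size (genList R D) = 'C(D, 2)].
Proof.
split.
- by move=> B /mapP [p _ ->]; split; [apply: genM_antisym | apply: genM_A_like].
- apply: (biorthogonal_free (phi := fun q => pair_coord q : {scalar mxX R D})).
  + exact: pairs_lt_uniq.
  + by move=> p pP; rewrite /= pair_coord_genM_pairs // eqxx pnatr_eq0.
  + by move=> p q pP qP pq; rewrite /= pair_coord_genM_pairs // (negPf pq).
- exact: antisym_A_like_span.
- by rewrite size_map size_pairs_lt.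
Qed.
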